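(* Let $\alpha\in(0,1]$, let $G$ be a planar 3-tree with $n$ vertices, and let $T=T(G)$ be its tree of triangles with the weights, heavy nodes and hubs defined as in the context. If $\Delta_1,\Delta_2$ are two distinct heavy nodes of $T$ that are siblings (have the same parent), then both $\Delta_1$ and $\Delta_2$ are hubs.
   Context: A planar 3-tree $G$ is constructed by starting from a triangle and repeatedly inserting a new vertex $u$ into a triangular face $\Delta=v_1v_2v_3$ of the current plane graph, joining $u$ to $v_1,v_2,v_3$. This process is encoded by a rooted tree $T=T(G)$: its nodes are triangles of $G$, its root is the initial triangle, and when $u$ is inserted into the face $\Delta=v_1v_2v_3$ (which is currently a leaf of $T$), the node $\Delta$ receives three children, the triangles $v_1v_2u$, $v_1uv_3$ and $uv_2v_3$. For a node $\Delta$ of $T$, let $V_\Delta$ be the set of vertices of $G$ lying in the interior of $\Delta$ (equivalently, the vertices inserted at nodes of the subtree of $T$ rooted at $\Delta$), and let $\mathrm{weight}(\Delta)=|V_\Delta|$. A node is heavy if its weight is at least $n^\alpha$ and light otherwise. Hubs are defined top-down: the root of $T$ is a hub, and a non-root node $\Delta$ is a hub if $n^\alpha\le \mathrm{weight}(\Delta)\le \mathrm{weight}(\Delta')-n^\alpha$ for every hub $\Delta'$ that is an ancestor of $\Delta$. *)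

From Stdlib Require Import Reals List Arith Bool.
Import ListNotations.
Open Scope R_scope.

(* The tree of triangles T(G) of a planar 3-tree G.  A node is a triangle;
   a Leaf is a face of the final graph G, a Node is a triangle into which a
   vertex u was inserted, with its three children v1v2u, v1uv3, uv2v3. *)
Inductive tree : Type :=
| Leaf : tree
| Node : tree -> tree -> tree -> tree.

(* weight(Δ) = |V_Δ| = number of vertices inserted in the subtree at Δ *)
Fixpoint weight (t : tree) : nat :=
  match t with
  | Leaf => 0%nat
  | Node a b c => S (weight a + weight b + weight c)
  end.

(* number of vertices of G: the three vertices of the initial triangle
   plus all inserted vertices *)
Definition nverts (t : tree) : nat := (3 + weight t)%nat.

Definition child (t : tree) (i : nat) : option tree :=
  match t with
  | Leaf => None
  | Node a b c =>
      match i with 0%nat => Some a | 1%nat => Some b | 2%nat => Some c | _ => None end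
  end.

(* nodes of T are addressed by their path from the root *)
Fixpoint subtree_at (t : tree) (p : list nat) : option tree :=
  match p with
  | [] => Some t
  | i :: p' => match child t i with Some c => subtree_at c p' | None => None end
  end.

Definition thr (n : nat) (alpha : R) : R := Rpower (INR n) alpha.

Definition Rleb (x y : R) : bool := if Rle_dec x y then true else false.

Definition heavy (n : nat) (alpha : R) (s : tree) : Prop :=
  thr n alpha <= INR (weight s).

(* hub condition of a non-root node of weight w, given the list of weights
   of its hub ancestors *)
Definition hubcondb (n : nat) (alpha : R) (ancw : list nat) (w : nat) : bool :=
  (Rleb (thr n alpha) (INR w) &&
  forallb (fun w' => Rleb (INR w) (INR w' - thr n alpha)) ancw)%bool.

(* top-down computation of hub status: t is the current node, isroot tells
   whether it is the root, ancw = weights of the hubs that are proper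
   ancestors of the current node; returns the hub status of the node at
   relative path p *)
Fixpoint hub_aux (n : nat) (alpha : R) (t : tree) (isroot : bool)
    (ancw : list nat) (p : list nat) : bool :=
  let h := (isroot || hubcondb n alpha ancw (weight t))%bool in
  match p with
  | [] => h
  | i :: p' =>
      match child t i with
      | Some c => hub_aux n alpha c false (if h then weight t :: ancw else ancw) p'
      | None => false
      end
  end.

Definition is_hub (alpha : R) (t : tree) (p : list nat) : Prop :=
  hub_aux (nverts t) alpha t true [] p = true.

(* The weights of the hubs above a node are at least the weight of the
   parent P of the node.  Two distinct heavy children D1, D2 of P satisfy
   weight D1 + weight D2 < weight P, so weight D1 <= weight P - n^alpha
   <= w' - n^alpha for every hub ancestor weight w'; being heavy, D1 is
   therefore a hub, and symmetrically so is D2.  Nothing about alpha or n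
   is used. *)

From Stdlib Require Import Reals List Arith Lia Lra.
Import ListNotations.
Open Scope R_scope.

Lemma weight_child_le (t c : tree) (i : nat) :
  child t i = Some c -> (weight c <= weight t)%nat.
Proof.
  destruct t as [|a b d]; simpl; [discriminate|].
  destruct i as [|[|[|i]]]; intro H; inversion H; subst; simpl; lia.
Qed.

Lemma weight_siblings_lt (P D1 D2 : tree) (i j : nat) :
  i <> j -> child P i = Some D1 -> child P j = Some D2 ->
  (weight D1 + weight D2 < weight P)%nat.
Proof.
  destruct P as [|a b c]; simpl; [discriminate|].
  intros Hij H1 H2.
  destruct i as [|[|[|i]]]; destruct j as [|[|[|j]]]; try discriminate;
    inversion H1; inversion H2; subst; simpl; lia.
Qed.

Lemma subtree_at_app (t : tree) (q p : list nat) :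
  subtree_at t (q ++ p) =
  match subtree_at t q with Some s => subtree_at s p | None => None end.
Proof.
  revert t; induction q as [|k q IH]; intro t; simpl; [reflexivity|].
  destruct (child t k); [apply IH | reflexivity].
Qed.

Lemma subtree_at_rcons (t D : tree) (q : list nat) (i : nat) :
  subtree_at t (q ++ [i]) = Some D ->
  exists P, subtree_at t q = Some P /\ child P i = Some D.
Proof.
  rewrite subtree_at_app; destruct (subtree_at t q) as [P|]; [|discriminate].
  simpl; destruct (child P i) eqn:E; intro H; [|discriminate].
  inversion H; subst; eauto.
Qed.

Lemma hubcondb_intro (n : nat) (alpha : R) (ancw : list nat) (w : nat) :
  thr n alpha <= INR w ->
  (forall w', In w' ancw -> INR w + thr n alpha <= INR w') ->
  hubcondb n alpha ancw w = true.
Proof.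
  intros Hheavy Hanc; unfold hubcondb, Rleb.
  destruct (Rle_dec _ _) as [_|]; [simpl | contradiction].
  apply forallb_forall; intros w' Hw'.
  destruct (Rle_dec _ _) as [|C]; [reflexivity|].
  specialize (Hanc w' Hw'); lra.
Qed.

Definition all_ge (w : nat) (ancw : list nat) : Prop :=
  Forall (fun w' => (w <= w')%nat) ancw.

Lemma all_ge_cons_if (w w0 : nat) (b : bool) (ancw : list nat) :
  (w <= w0)%nat -> all_ge w ancw -> all_ge w (if b then w0 :: ancw else ancw).
Proof. intros Hw Hge; destruct b; [constructor|]; assumption. Qed.

Lemma all_ge_le (w w0 : nat) (ancw : list nat) :
  (w <= w0)%nat -> all_ge w0 ancw -> all_ge w ancw.
Proof. intro Hw; apply Forall_impl; intros; lia. Qed.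

Section HubAux.

Variables (n : nat) (alpha : R).

Lemma hub_aux_descend (t P : tree) (q p : list nat) (isroot : bool)
    (ancw : list nat) :
  subtree_at t q = Some P -> all_ge (weight t) ancw ->
  exists isroot' ancw', all_ge (weight P) ancw' /\
    hub_aux n alpha t isroot ancw (q ++ p) = hub_aux n alpha P isroot' ancw' p.
Proof.
  revert t isroot ancw; induction q as [|k q IH]; intros t isroot ancw Hs Hge.
  - inversion Hs; subst; eauto.
  - simpl in *; destruct (child t k) as [c|] eqn:Ec; [|discriminate].
    pose proof (weight_child_le _ _ _ Ec) as Hct.
    apply IH; [exact Hs|].
    apply all_ge_cons_if; [exact Hct | exact (all_ge_le _ _ _ Hct Hge)].
Qed.

Lemma hub_aux_heavy_sibling (P D1 D2 : tree) (i j : nat) (isroot : bool)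
    (ancw : list nat) :
  i <> j -> child P i = Some D1 -> child P j = Some D2 ->
  heavy n alpha D1 -> heavy n alpha D2 -> all_ge (weight P) ancw ->
  hub_aux n alpha P isroot ancw [i] = true.
Proof.
  intros Hij H1 H2 h1 h2 Hge; simpl; rewrite H1.
  pose proof (weight_siblings_lt _ _ _ _ _ Hij H1 H2) as Hlt.
  pose proof (all_ge_cons_if _ _ (isroot || hubcondb n alpha ancw (weight P))
                _ (le_n _) Hge) as Hl.
  apply hubcondb_intro; [exact h1|].
  intros w' Hw'; unfold all_ge in Hl; rewrite Forall_forall in Hl.
  assert (Hle : (weight D1 + weight D2 <= w')%nat) by (specialize (Hl w' Hw'); lia).
  apply le_INR in Hle; rewrite plus_INR in Hle; unfold heavy in h2; lra.
Qed.

Lemma hub_aux_heavy_sibling_path (t P D1 D2 : tree) (q : list nat) (i j : nat) :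
  i <> j -> subtree_at t q = Some P ->
  child P i = Some D1 -> child P j = Some D2 ->
  heavy n alpha D1 -> heavy n alpha D2 ->
  hub_aux n alpha t true [] (q ++ [i]) = true.
Proof.
  intros Hij Hs H1 H2 h1 h2.
  destruct (hub_aux_descend t P q [i] true [] Hs (Forall_nil _))
    as (isroot' & ancw' & Hge & ->).
  exact (hub_aux_heavy_sibling P D1 D2 i j isroot' ancw' Hij H1 H2 h1 h2 Hge).
Qed.

End HubAux.

Theorem lemma1 (alpha : R) (T : tree) (q : list nat) (i j : nat) (D1 D2 : tree) :
  0 < alpha <= 1 ->
  i <> j ->
  subtree_at T (q ++ [i]) = Some D1 ->
  subtree_at T (q ++ [j]) = Some D2 ->
  heavy (nverts T) alpha D1 ->
  heavy (nverts T) alpha D2 ->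
  is_hub alpha T (q ++ [i]) /\ is_hub alpha T (q ++ [j]).
Proof.
  intros _ Hij E1 E2 h1 h2.
  destruct (subtree_at_rcons _ _ _ _ E1) as (P & HP & C1).
  destruct (subtree_at_rcons _ _ _ _ E2) as (P' & HP' & C2).
  rewrite HP in HP'; injection HP' as <-.
  unfold is_hub; split.
  - exact (hub_aux_heavy_sibling_path _ _ T P D1 D2 q i j Hij HP C1 C2 h1 h2).
  - exact (hub_aux_heavy_sibling_path _ _ T P D2 D1 q j i
             (not_eq_sym Hij) HP C2 C1 h2 h1).
Qed.
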